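(* Under the setting of the context, define $c^{(m)}(i,y)=\sum_{u\in\mathcal V}q(i,y,u)\bigl[(v-g)(i,y+u/m)-(v-g)(i,y)\bigr]$ for $i\in E$, $y\in[0,1]^d$, and $$Z_{n+1}=R_{n+1}+v(\xi_{n+1},R_{n+1}/m)-\bigl[R_n+v(\xi_n,R_n/m)+(h-g)(\xi_n,R_n/m)+c^{(m)}(\xi_n,R_n/m)\bigr].$$ Then $\mathbb E(Z_{n+1}\mid\mathcal F_n)=0$ for all $n\ge0$, i.e. $R_{n+1}+v(\xi_{n+1},R_{n+1}/m)=R_n+v(\xi_n,R_n/m)+(h-g)(\xi_n,R_n/m)+c^{(m)}(\xi_n,R_n/m)+Z_{n+1}$ with $Z_{n+1}$ a martingale increment. Moreover there is a constant $C$, depending only on $E$, $P$ and $p$, such that $|c^{(m)}(i,y)|\le C/m$ for all $m\ge1$, $i\in E$, $y\in[0,1]^d$.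
   Context: Let $d\ge1$, $(e_1,\dots,e_d)$ the canonical basis, $\mathcal V=\{\pm e_1,\dots,\pm e_d\}$. Let $E$ be a finite set and $P$ an irreducible and aperiodic stochastic matrix on $E$ with unique invariant probability $\mu$. For $k\in E$, $y\in\mathbb R^d$, $p(k,y,\cdot)$ is a probability on $\mathcal V$, with $y\mapsto p(k,y,u)$ twice continuously differentiable with bounded derivatives. Let $g(k,y)=\sum_uu\,p(k,y,u)$, assumed to satisfy $\sum_k\mu(k)g(k,y)=0$ for all $y$, and $v(i,y)=\sum_{n\ge0}\sum_jP^n(i,j)g(j,y)$. Reflected kernel: for $k\in E$, $y\in[0,1]^d$, $\ell\le d$: if $0<y_\ell<1$, $q(k,y,\pm e_\ell)=p(k,y,\pm e_\ell)$; if $y_\ell=1$, $q(k,y,e_\ell)=0$, $q(k,y,-e_\ell)=p(k,y,e_\ell)+p(k,y,-e_\ell)$; if $y_\ell=0$, $q(k,y,-e_\ell)=0$, $q(k,y,e_\ell)=p(k,y,e_\ell)+p(k,y,-e_\ell)$; $h(k,y)=\sum_uu\,q(k,y,u)$. For $m\ge1$, $(\xi_n,R_n)_{n\ge0}$ is a Markov chain on $E\times\{0,\dots,m\}^d$ with $R_0=0$ and, with $\mathcal F_n=\sigma(\xi_0,\dots,\xi_n,R_0,\dots,R_n)$, $\mathbb P(\xi_{n+1}=k,R_{n+1}=R_n+u\mid\mathcal F_n)=P(\xi_n,k)q(\xi_n,R_n/m,u)$. *)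

From HB Require Import structures.
From mathcomp Require Import all_boot all_order all_algebra.
From mathcomp Require Import all_classical all_reals all_analysis.

Set Implicit Arguments.
Unset Strict Implicit.
Unset Printing Implicit Defensive.

Import Order.TTheory GRing.Theory Num.Theory.
Import numFieldNormedType.Exports.
Local Open Scope classical_set_scope.
Local Open Scope ring_scope.

Section Defs.
Variable R : realType.

Section Chain.
Variable E : finType.
Variable P : E -> E -> R.

Fixpoint Ppow (n : nat) (i j : E) : R :=
  match n with
  | 0 => (i == j)%:R
  | n'.+1 => \sum_(k : E) P i k * Ppow n' k j
  end.

Definition stochastic : Prop :=
  (forall i j, 0 <= P i j) /\ (forall i, \sum_(j : E) P i j = 1).

Definition irreducible : Prop := forall i j, exists n, 0 < Ppow n i j.

Definition aperiodic : Prop :=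
  forall i (k : nat), (forall n, (0 < n)%N -> 0 < Ppow n i i -> (k %| n)%N) ->
    k = 1%N.

Definition invariant_probability (mu : E -> R) : Prop :=
  (forall i, 0 <= mu i) /\ \sum_(i : E) mu i = 1 /\
  (forall j, \sum_(i : E) mu i * P i j = mu j).
End Chain.

Section Directions.
Variable d : nat.

Definition dirV (u : 'I_d * bool) : 'rV[R]_d :=
  (if u.2 then 1 else -1) *: delta_mx 0 u.1.

Definition unit_cube (y : 'rV[R]_d) : Prop := forall l, 0 <= y 0 l <= 1.

Definition C2_bounded_derivs (f : 'rV[R]_d -> R) : Prop :=
  (forall x l, derivable f x (delta_mx 0 l)) /\
  (forall x l l', derivable ('D_(delta_mx 0 l) f) x (delta_mx 0 l')) /\
  (forall l l', continuous ('D_(delta_mx 0 l') ('D_(delta_mx 0 l) f))) /\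
  (exists M, forall x l, `|'D_(delta_mx 0 l) f x| <= M) /\
  (exists M, forall x l l', `|'D_(delta_mx 0 l') ('D_(delta_mx 0 l) f) x| <= M).

Variable E : finType.
Variable P : E -> E -> R.
Variable p : E -> 'rV[R]_d -> 'I_d * bool -> R.

Definition g (k : E) (y : 'rV[R]_d) : 'rV[R]_d :=
  \sum_(u : 'I_d * bool) p k y u *: dirV u.

Definition v (i : E) (y : 'rV[R]_d) : 'rV[R]_d :=
  limn (fun N => \sum_(0 <= n < N) \sum_(j : E) Ppow P n i j *: g j y).

Definition q (k : E) (y : 'rV[R]_d) (u : 'I_d * bool) : R :=
  let l := u.1 in
  let ptot := p k y (l, true) + p k y (l, false) in
  if y 0 l == 1 then (if u.2 then 0 else ptot)
  else if y 0 l == 0 then (if u.2 then ptot else 0)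
  else p k y u.

Definition h (k : E) (y : 'rV[R]_d) : 'rV[R]_d :=
  \sum_(u : 'I_d * bool) q k y u *: dirV u.

Definition cm (m : nat) (i : E) (y : 'rV[R]_d) : 'rV[R]_d :=
  \sum_(u : 'I_d * bool) q i y u *:
    ((v i (y + m%:R^-1 *: dirV u) - g i (y + m%:R^-1 *: dirV u))
     - (v i y - g i y)).

Variable m : nat.
Definition state := (E * {ffun 'I_d -> 'I_m.+1})%type.

Definition rvec (r : {ffun 'I_d -> 'I_m.+1}) : 'rV[R]_d := \row_l (r l)%:R.

Section Process.
Variable T : Type.
Variable X : nat -> T -> state.   (* X n = (xi_n, R_n) *)

Definition history (n : nat) (w : T) : seq state :=
  [seq X k w | k <- iota 0 n.+1].

(* F_n = sigma(xi_0,...,xi_n,R_0,...,R_n): since these variables take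
   finitely many values, its events are exactly the preimages of sets of
   histories *)
Definition Fn (n : nat) (A : set T) : Prop :=
  exists S : set (seq state), A = history n @^-1` S.

Definition Z (n : nat) (w : T) : 'rV[R]_d :=
  let i := (X n w).1 in
  let y := m%:R^-1 *: rvec (X n w).2 in
  rvec (X n.+1 w).2 + v (X n.+1 w).1 (m%:R^-1 *: rvec (X n.+1 w).2)
  - (rvec (X n w).2 + v i y + (h i y - g i y) + cm m i y).
End Process.
End Directions.
End Defs.

From HB Require Import structures.
From mathcomp Require Import all_boot all_order all_algebra.
From mathcomp Require Import all_classical all_reals all_analysis.
From mathcomp Require Import zify ring lra.

(* Since P is irreducible and aperiodic, some power P^N has all its entries
   positive, so by Doeblin's argument P^n shrinks the oscillation of any function
   geometrically.  Hence for g centred under mu the series v = sum_n P^n g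
   converges, is linear in g with |v| <= K sup |g|, and solves the Poisson
   equation P v = v - g.  Averaging v(xi_{n+1}, R_{n+1}/m) over the next
   environment state therefore gives (v - g)(xi_n, R_{n+1}/m), and averaging
   that over the jump gives R_n + v + (h - g) + c^(m) at time n: this is the
   martingale property of Z.  As p has bounded derivatives, g is Lipschitz, hence
   so is v, and c^(m), an average of increments of v - g over steps of length
   1/m, is O(1/m). *)

Set Implicit Arguments.
Unset Strict Implicit.
Unset Printing Implicit Defensive.

Import Order.TTheory GRing.Theory Num.Theory.
Import numFieldNormedType.Exports.
Local Open Scope classical_set_scope.
Local Open Scope ring_scope.

Section MatrixPowers.
Variables (R : realType) (E : finType) (P : E -> E -> R).
Hypothesis P_ge0 : forall i j, 0 <= P i j.
Hypothesis P_sum1 : forall i, \sum_j P i j = 1.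

Lemma sum_delta (F : E -> R) i : \sum_k (i == k)%:R * F k = F i.
Proof.
rewrite (bigD1 i) //= eqxx mul1r big1 ?addr0 // => k /negbTE.
by rewrite eq_sym => ->; rewrite mul0r.
Qed.

Lemma Ppow_ge0 n i j : 0 <= Ppow P n i j.
Proof.
elim: n i j => [|n IH] i j /=; first by rewrite ler0n.
by apply: sumr_ge0 => k _; rewrite mulr_ge0.
Qed.

Lemma Ppow_sum1 n i : \sum_j Ppow P n i j = 1.
Proof.
elim: n i => [|n IH] i /=.
  by rewrite -[RHS](sum_delta (fun=> 1) i); under [RHS]eq_bigr do rewrite mulr1.
by rewrite exchange_big /=; under eq_bigr do rewrite -mulr_sumr IH mulr1.
Qed.

Lemma PpowD a b i j : Ppow P (a + b) i j = \sum_k Ppow P a i k * Ppow P b k j.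
Proof.
elim: a i => [|a IH] i; first by rewrite add0n /= sum_delta.
rewrite addSn /=; under eq_bigr do rewrite IH mulr_sumr.
rewrite exchange_big /=; apply: eq_bigr => l _.
by rewrite mulr_suml; apply: eq_bigr => k _; rewrite mulrA.
Qed.

Lemma Ppow1 i j : Ppow P 1 i j = P i j.
Proof.
by rewrite /= (bigD1 j) //= eqxx mulr1 big1 ?addr0 // => k /negbTE ->; rewrite mulr0.
Qed.

Lemma Ppow_gt0D a b i k j :
  0 < Ppow P a i k -> 0 < Ppow P b k j -> 0 < Ppow P (a + b) i j.
Proof.
move=> ha hb; rewrite PpowD (bigD1 k) //=; apply: ltr_pwDl; first by rewrite mulr_gt0.
by apply: sumr_ge0 => l _; rewrite mulr_ge0 ?Ppow_ge0.
Qed.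

Lemma Ppow_gt0M i k n : 0 < Ppow P n i i -> 0 < Ppow P (k * n) i i.
Proof.
move=> hn; elim: k => [|k IH]; first by rewrite mul0n /= eqxx ltr01.
by rewrite mulSn; apply: Ppow_gt0D hn IH.
Qed.

Definition Pact n (x : E -> R) i := \sum_j Ppow P n i j * x j.

Lemma PactD a b x i : Pact (a + b) x i = \sum_k Ppow P a i k * Pact b x k.
Proof.
rewrite /Pact; under eq_bigr do rewrite PpowD mulr_suml.
rewrite exchange_big /=; apply: eq_bigr => k _.
by rewrite mulr_sumr; apply: eq_bigr => j _; rewrite mulrA.
Qed.

Lemma Pact0 x i : Pact 0 x i = x i.
Proof. exact: sum_delta. Qed.

Lemma PactS n x i : Pact n.+1 x i = \sum_k P i k * Pact n x k.
Proof. by rewrite -add1n PactD; apply: eq_bigr => k _; rewrite Ppow1. Qed.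

End MatrixPowers.

Section Primitivity.
Variables (R : realType) (E : finType) (P : E -> E -> R).
Hypothesis P_ge0 : forall i j, 0 <= P i j.
Hypothesis P_sum1 : forall i, \sum_j P i j = 1.
Hypothesis P_irr : irreducible P.
Hypothesis P_aper : aperiodic P.

Lemma return_time_gt0 i : exists2 n, (0 < n)%N & 0 < Ppow P n i i.
Proof.
case: (pickP (fun j => j != i)) => [j ji | only_i].
  have [a ha] := P_irr i j; have [b hb] := P_irr j i.
  exists (a + b)%N; last exact: Ppow_gt0D ha hb.
  by case: a ha => [|a] //=; rewrite eq_sym (negbTE ji) ltxx.
exists 1%N => //; rewrite Ppow1.
suff <- : \sum_j P i j = P i i by rewrite P_sum1 ltr01.
by rewrite (bigD1 i) //= big1 ?addr0 // => j ji; move: (only_i j); rewrite /= ji.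
Qed.

(* Euclid's algorithm on return times: two return times at distance d > 1 yield,
   by aperiodicity, two return times at a distance smaller than d. *)
Lemma consecutive_return_times i :
  exists x, 0 < Ppow P x i i /\ 0 < Ppow P x.+1 i i.
Proof.
have [n0 n0_gt0 hn0] := return_time_gt0 i.
suff : forall d, (0 < d)%N -> forall x, 0 < Ppow P x i i ->
    0 < Ppow P (x + d) i i -> exists x, 0 < Ppow P x i i /\ 0 < Ppow P x.+1 i i.
  by move/(_ n0 n0_gt0 0%N); apply; rewrite /= ?eqxx ?ltr01.
elim/ltn_ind => d IH d_gt0 x hx hxd.
have [d1|d_neq1] := eqVneq d 1%N; first by exists x; rewrite -addn1 -d1.
have [n [n_gt0 hn d_ndvd]] : exists n, [/\ (0 < n)%N, 0 < Ppow P n i i & ~~ (d %| n)%N].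
  apply: contrapT => none; move/eqP: d_neq1; apply; apply: (@P_aper i) => n n_gt0 hn.
  by apply: contrapT => /negP ndvd; apply: none; exists n.
set r := (n %% d)%N; set k := (n %/ d)%N.
have r_gt0 : (0 < r)%N.
  by rewrite lt0n; apply: contra d_ndvd => /eqP r0; rewrite /dvdn -/r r0.
have r_lt : (r < d)%N by rewrite ltn_pmod.
apply: (IH (d - r)%N _ _ (n + k.+1 * x)%N).
- by rewrite ltn_subrL r_gt0 d_gt0.
- by rewrite subn_gt0.
- exact: Ppow_gt0D hn (Ppow_gt0M P_ge0 k.+1 hx).
- have -> : (n + k.+1 * x + (d - r) = k.+1 * (x + d))%N.
    rewrite [in LHS](divn_eq n d) -/r -/k mulnDr [(k.+1 * d)%N]mulSn.
    move: (k * d)%N (k.+1 * x)%N => A B; lia.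
  exact: Ppow_gt0M.
Qed.

Lemma Ppow_diag_eventually_gt0 i : exists N, forall n, (N <= n)%N -> 0 < Ppow P n i i.
Proof.
have [[|x] [hx hx1]] := consecutive_return_times i.
  by exists 0%N => n _; rewrite -[n]muln1; apply: Ppow_gt0M.
exists (x.+1 * x.+1)%N => n hn.
set k := (n %/ x.+1)%N; set r := (n %% x.+1)%N.
have r_lt : (r < x.+1)%N by rewrite ltn_pmod.
have x_le : (x.+1 <= k)%N by rewrite leq_divRL.
(* the consecutive return times x+1 and x+2 generate every n >= (x+1)^2 *)
have -> : n = ((k - r) * x.+1 + r * x.+2)%N.
  rewrite {1}(divn_eq n x.+1) -/k -/r mulnBl [(r * x.+2)%N]mulnS.
  have : (r * x.+1 <= k * x.+1)%N by rewrite leq_mul2r (leq_trans (ltnW r_lt) x_le) orbT.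
  move: (r * x.+1)%N (k * x.+1)%N => A B; lia.
exact (Ppow_gt0D P_ge0 (Ppow_gt0M P_ge0 (k - r) hx) (Ppow_gt0M P_ge0 r hx1)).
Qed.

Lemma Ppow_primitive : exists2 N, (0 < N)%N & forall i j, 0 < Ppow P N i j.
Proof.
have eventually_gt0 (ij : E * E) :
    exists N, forall n, (N <= n)%N -> 0 < Ppow P n ij.1 ij.2.
  case: ij => i j /=; have [N hN] := Ppow_diag_eventually_gt0 i.
  have [a ha] := P_irr i j; exists (N + a)%N => n hn.
  rewrite -(subnK (leq_trans (leq_addl N a) hn)); apply: Ppow_gt0D (hN _ _) ha => //.
  lia.
have [f hf] := fin_all_exists eventually_gt0.
exists (\max_ij f ij).+1 => // i j.
by apply: (hf (i, j)); apply/leqW/leq_bigmax.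
Qed.

End Primitivity.

Section Bands.
Variables (R : realDomainType) (E : finType).

Definition band (a w : R) (x : E -> R) := forall j, a <= x j <= a + w.

Lemma band_stochastic (Q : E -> E -> R) a w x :
  (forall i j, 0 <= Q i j) -> (forall i, \sum_j Q i j = 1) ->
  band a w x -> band a w (fun i => \sum_j Q i j * x j).
Proof.
move=> Q_ge0 Q_sum1 hx i.
have -> : \sum_j Q i j * x j = a + \sum_j Q i j * (x j - a).
  under [X in _ = _ + X]eq_bigr do rewrite mulrBr.
  by rewrite sumrB -mulr_suml Q_sum1 mul1r addrC subrK.
rewrite lerDl lerD2l; apply/andP; split.
  by apply: sumr_ge0 => j _; rewrite mulr_ge0 // subr_ge0; case/andP: (hx j).
rewrite -[w]mul1r -(Q_sum1 i) mulr_suml; apply: ler_sum => j _.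
by apply: ler_wpM2l => //; rewrite lerBlDl; case/andP: (hx j).
Qed.

Lemma band_minorized (Q : E -> E -> R) (dl : R) a w x :
  (forall i j, dl <= Q i j) -> (forall i, \sum_j Q i j = 1) -> 0 <= w ->
  band a w x ->
  exists a', band a' ((1 - #|E|%:R * dl) * w) (fun i => \sum_j Q i j * x j).
Proof.
move=> Q_ge Q_sum1 w_ge0 hx; exists (a + dl * \sum_j (x j - a)) => i.
have -> : \sum_j Q i j * x j =
    a + dl * \sum_j (x j - a) + \sum_j (Q i j - dl) * (x j - a).
  rewrite mulr_sumr -addrA -big_split /=.
  under [X in _ = _ + X]eq_bigr do rewrite mulrBl addrC subrK mulrBr.
  by rewrite sumrB -mulr_suml Q_sum1 mul1r addrC subrK.
rewrite lerDl lerD2l; apply/andP; split.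
  by apply: sumr_ge0 => j _; rewrite mulr_ge0 // subr_ge0 //; case/andP: (hx j).
have -> : 1 - #|E|%:R * dl = \sum_j (Q i j - dl).
  by rewrite sumrB Q_sum1 sumr_const mulr_natl cardE.
rewrite mulr_suml; apply: ler_sum => j _.
by apply: ler_wpM2l; rewrite ?subr_ge0 // lerBlDl; case/andP: (hx j).
Qed.

Lemma band_mean0_norm (mu : E -> R) a w x :
  (forall i, 0 <= mu i) -> \sum_i mu i = 1 ->
  band a w x -> \sum_i mu i * x i = 0 -> forall i, `|x i| <= w.
Proof.
move=> mu_ge0 mu_sum1 hx hmean i.
have mean_in_band : a <= 0 <= a + w.
  rewrite -hmean -[a in a <= _]mul1r -[a + w]mul1r -mu_sum1 !mulr_suml.
  by apply/andP; split; apply: ler_sum => j _; apply: ler_wpM2l => //; case/andP: (hx j).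
case/andP: (hx i); case/andP: mean_in_band; rewrite ler_norml => *.
by apply/andP; split; lra.
Qed.

End Bands.

Lemma sum_expr_divn (R : realDomainType) (t : R) N K : (0 < N)%N ->
  \sum_(0 <= n < K * N) t ^+ (n %/ N) = N%:R * \sum_(0 <= k < K) t ^+ k.
Proof.
move=> N_gt0; elim: K => [|K IH]; first by rewrite mul0n !big_geq // mulr0.
rewrite mulSn addnC (@big_cat_nat _ _ _ (K * N)) ?leq_addr //= IH.
rewrite big_nat_recr //= mulrDr; congr (_ + _).
rewrite (eq_big_nat _ _ (F2 := fun=> t ^+ K)) ?sumr_const_nat ?addKn ?mulr_natl // => n.
case/andP => le_n lt_n; rewrite -(subnKC le_n) divnMDl // divn_small ?addn0 //.
by rewrite ltn_subLR // addnC.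
Qed.

Lemma sum_expr_divn_le (R : realFieldType) (t : R) N M :
  0 <= t < 1 -> (0 < N)%N -> \sum_(0 <= n < M) t ^+ (n %/ N) <= N%:R / (1 - t).
Proof.
case/andP=> t_ge0 t_lt1 N_gt0.
have M_le : (M <= M * N)%N by rewrite -{1}[M]muln1 leq_mul2l N_gt0 orbT.
apply: (@le_trans _ _ (\sum_(0 <= n < M * N) t ^+ (n %/ N))).
  rewrite [leRHS](@big_cat_nat _ _ _ M) //= lerDl.
  by apply: sumr_ge0 => n _; rewrite exprn_ge0.
rewrite sum_expr_divn // ler_pdivlMr ?subr_gt0 // -mulrA big_mkord.
have -> : (\sum_(i < M) t ^+ i) * (1 - t) = 1 - t ^+ M.
  by rewrite mulrC -opprB mulNr -subrX1 opprB.
by rewrite -[leRHS]mulr1 ler_wpM2l ?ler0n // lerBlDr lerDl exprn_ge0.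
Qed.

Section Ergodicity.
Variables (R : realType) (E : finType) (P : E -> E -> R) (mu : E -> R).
Hypothesis P_ge0 : forall i j, 0 <= P i j.
Hypothesis P_sum1 : forall i, \sum_j P i j = 1.
Hypothesis P_irr : irreducible P.
Hypothesis P_aper : aperiodic P.
Hypothesis mu_inv : invariant_probability P mu.

Lemma band_Pact n a w x : band a w x -> band a w (Pact P n x).
Proof.
move=> hx; elim: n => [|n IH] i; first by rewrite Pact0.
by rewrite PactS; apply: (band_stochastic P_ge0 P_sum1 IH).
Qed.

Lemma sum_mu_Pact n x : \sum_i mu i * Pact P n x i = \sum_i mu i * x i.
Proof.
have [_ [_ mu_fix]] := mu_inv.
elim: n => [|n IH]; first by under eq_bigr do rewrite Pact0.
under eq_bigr do rewrite PactS mulr_sumr.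
rewrite exchange_big /= -IH; apply: eq_bigr => k _.
by under eq_bigr do rewrite mulrA; rewrite -mulr_suml mu_fix.
Qed.

Lemma Pact_mean0_geometric : exists2 N, (0 < N)%N & exists2 th : R, 0 <= th < 1 &
  forall x B, (forall j, `|x j| <= B) -> \sum_j mu j * x j = 0 ->
  forall n i, `|Pact P n x i| <= th ^+ (n %/ N) * (2 * B).
Proof.
have [mu_ge0 [mu_sum1 _]] := mu_inv.
have [i0 _] : exists i0 : E, True.
  case: (pickP (@predT E)) => [i0 _|none]; first by exists i0.
  by move: mu_sum1; rewrite big_pred0 // => /esym/eqP; rewrite oner_eq0.
have [N N_gt0 PN_gt0] := Ppow_primitive P_ge0 P_sum1 P_irr P_aper.
pose dl := \big[Order.min/1]_(ij : E * E) Ppow P N ij.1 ij.2.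
have PN_ge i j : dl <= Ppow P N i j.
  exact: (bigmin_le _ (i, j) (fun ij => Ppow P N ij.1 ij.2)).
have dl_gt0 : 0 < dl by apply: lt_bigmin => [|ij _]; [exact: ltr01 | exact: PN_gt0].
have th_ge0 : 0 <= 1 - #|E|%:R * dl.
  have : \sum_(j : E) dl <= \sum_j Ppow P N i0 j.
    by apply: ler_sum => j _; apply: PN_ge.
  by rewrite Ppow_sum1 // sumr_const subr_ge0 mulr_natl.
exists N => //; exists (1 - #|E|%:R * dl).
  by rewrite th_ge0 ltrBlDr ltrDl mulr_gt0 // ltr0n; apply/card_gt0P; exists i0.
move=> x B x_le hmean.
have B_ge0 : 0 <= B by apply: le_trans (x_le i0).
have blocks k r :
    exists a, band a ((1 - #|E|%:R * dl) ^+ k * (2 * B)) (Pact P (k * N + r) x).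
  elim: k => [|k [a ha]].
    exists (- B); rewrite mul0n add0n expr0 mul1r; apply: band_Pact => j.
    by have := x_le j; rewrite ler_norml => /andP[? ?]; apply/andP; split; lra.
  have [a' ha'] := band_minorized PN_ge (Ppow_sum1 P_sum1 N)
    (mulr_ge0 (exprn_ge0 k th_ge0) (mulr_ge0 (ler0n _ 2) B_ge0)) ha.
  by exists a'; rewrite mulSn -addnA exprS -mulrA => i; rewrite PactD; apply: ha'.
move=> n i; have [a ha] := blocks (n %/ N)%N (n %% N)%N; rewrite -divn_eq in ha.
by apply: (band_mean0_norm mu_ge0 mu_sum1 ha); rewrite sum_mu_Pact.
Qed.

End Ergodicity.

(* The library equips matrices with a normed-module and a complete structure
   separately; their join gives access to [normed_cvg] and [lim_series_norm]. *)
HB.instance Definition _ (R : realType) (m n : nat) := NormedModule.on 'M[R]_(m, n).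

Lemma rV_norm_le (R : realDomainType) d (M : 'rV[R]_d) b :
  0 <= b -> (forall l, `|M 0 l| <= b) -> `|M| <= b.
Proof.
move=> b_ge0 hb; rewrite [`|M|]/Num.norm /= mx_normrE.
by apply: bigmax_le => // -[i l] _ /=; rewrite ord1.
Qed.

Lemma rV_entry_norm_le (R : realDomainType) d (M : 'rV[R]_d) l : `|M 0 l| <= `|M|.
Proof.
rewrite [`|M|]/Num.norm /= mx_normrE.
exact: (le_bigmax _ (fun ij : 'I_1 * 'I_d => `|M ij.1 ij.2|) (0, l)).
Qed.

Section Potential.
Variables (R : realType) (E : finType) (P : E -> E -> R) (d : nat).

Definition Pseries (G : E -> 'rV[R]_d) i := series (fun n => \sum_j Ppow P n i j *: G j).

Definition potential (G : E -> 'rV[R]_d) i := limn (Pseries G i).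

Lemma potentialB (G1 G2 : E -> 'rV[R]_d) i :
  cvgn (Pseries G1 i) -> cvgn (Pseries G2 i) ->
  potential (fun j => G1 j - G2 j) i = potential G1 i - potential G2 i.
Proof.
move=> cv1 cv2; rewrite /potential -limB //; congr (limn _); apply/funext => N.
rewrite fctE /Pseries /series -sumrB; apply: eq_bigr => n _.
by rewrite -sumrB; apply: eq_bigr => j _; rewrite scalerBr.
Qed.

Lemma potential_Poisson (G : E -> 'rV[R]_d) i :
  (forall k, cvgn (Pseries G k)) ->
  \sum_k P i k *: potential G k = potential G i - G i.
Proof.
move=> cvG.
have shift N : \sum_k P i k *: Pseries G k N = Pseries G i N.+1 - G i.
  rewrite /Pseries /series /= big_nat_recl //=.
  have -> : \sum_j Ppow P 0 i j *: G j = G i.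
    rewrite (bigD1 i) //= eqxx scale1r big1 ?addr0 // => j /negbTE.
    by rewrite eq_sym => ->; rewrite scale0r.
  rewrite [G i + _]addrC addrK.
  under eq_bigr do rewrite scaler_sumr; rewrite exchange_big /=.
  apply: eq_bigr => n _; under [RHS]eq_bigr do rewrite scaler_suml.
  rewrite exchange_big /=; apply: eq_bigr => k _.
  by rewrite scaler_sumr; apply: eq_bigr => j _; rewrite scalerA.
have lhs :
    (fun N => \sum_k P i k *: Pseries G k N) @ \oo --> \sum_k P i k *: potential G k.
  apply: (@cvg_big _ _ +%R 0 predT add_continuous) => // k _.
  exact: cvgZ (cvg_cst _) (cvG k).
have rhs : (fun N => Pseries G i N.+1 - G i) @ \oo --> potential G i - G i.
  by apply: cvgB (cvg_cst _); rewrite (cvg_shiftS (Pseries G i)); apply: cvG.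
by rewrite -(cvg_lim _ rhs) // -(funext shift) (cvg_lim _ lhs).
Qed.

End Potential.

Section PotentialBound.
Variables (R : realType) (E : finType) (P : E -> E -> R) (mu : E -> R).
Hypothesis P_ge0 : forall i j, 0 <= P i j.
Hypothesis P_sum1 : forall i, \sum_j P i j = 1.
Hypothesis P_irr : irreducible P.
Hypothesis P_aper : aperiodic P.
Hypothesis mu_inv : invariant_probability P mu.

Lemma potential_bound : exists2 K : R, 0 <= K & forall d (G : E -> 'rV[R]_d) B,
  (forall j, `|G j| <= B) -> \sum_j mu j *: G j = 0 ->
  forall i, cvgn (Pseries P G i) /\ `|potential P G i| <= K * B.
Proof.
have [N N_gt0 [th /andP[th_ge0 th_lt1] decay]] :=
  Pact_mean0_geometric P_ge0 P_sum1 P_irr P_aper mu_inv.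
have K_ge0 : 0 <= N%:R / (1 - th) * 2.
  by rewrite mulr_ge0 // divr_ge0 // subr_ge0 ltW.
exists (N%:R / (1 - th) * 2) => // d G B G_le G_mean i.
have B_ge0 : 0 <= B := le_trans (normr_ge0 _) (G_le i).
have term_le n : `|\sum_j Ppow P n i j *: G j| <= th ^+ (n %/ N) * (2 * B).
  apply: rV_norm_le; first by rewrite mulr_ge0 ?exprn_ge0 ?mulr_ge0.
  move=> l; rewrite summxE.
  have -> : \sum_j (Ppow P n i j *: G j) 0 l = Pact P n (fun j => G j 0 l) i.
    by apply: eq_bigr => j _; rewrite mxE.
  apply: decay => [j|]; first exact: le_trans (rV_entry_norm_le _ _) (G_le j).
  have := congr1 (fun M : 'rV[R]_d => M 0 l) G_mean; rewrite /= summxE mxE => mean_l.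
  by rewrite -[RHS]mean_l; apply: eq_bigr => j _; rewrite mxE.
have partial_le M : [normed Pseries P G i] M <= N%:R / (1 - th) * 2 * B.
  apply: le_trans (ler_sum_nat (fun n _ => term_le n)) _.
  rewrite -mulr_suml -[leRHS]mulrA; apply: ler_wpM2r; first by rewrite mulr_ge0.
  by apply: sum_expr_divn_le; rewrite ?th_ge0.
have cvn : cvgn [normed Pseries P G i].
  apply: nondecreasing_is_cvgn.
    by apply: nondecreasing_series => n _ _; apply: normr_ge0.
  by exists (N%:R / (1 - th) * 2 * B) => _ [M _ <-].
split; first exact: normed_cvg.
apply: le_trans (lim_series_norm cvn) _.
by apply: limr_le => //; near=> M; apply: partial_le.
Unshelve. all: by end_near.
Qed.

End PotentialBound.

Lemma lipschitz_along (R : realType) (V : normedModType R) (f : V -> R) (e : V) M :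
  (forall x, derivable f x e) -> (forall x, `|'D_e f x| <= M) ->
  forall y t, `|f (y + t *: e) - f y| <= M * `|t|.
Proof.
move=> df f'_le y t; pose phi s := f (y + s *: e).
have phi' (s : R) : is_derive s 1 phi ('D_e f (y + s *: e)).
  have quot : (fun h : R => h^-1 *: ((phi \o shift s) (h *: 1) - phi s)) =
      (fun h : R => h^-1 *: ((f \o shift (y + s *: e)) (h *: e) - f (y + s *: e))).
    apply/funext => h; rewrite /phi /shift /=; congr (_ *: (f _ - _)).
    by rewrite [h *: 1]mulr1 scalerDl addrCA addrA.
  apply: DeriveDef; first by rewrite /derivable quot; apply: df.
  by rewrite /derive quot.
have phi_cont (a b : R) : {within `[a, b], continuous phi}.
  by apply: derivable_within_continuous => s _; case: (phi' s).
have M_ge0 : 0 <= M := le_trans (normr_ge0 _) (f'_le y).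
have -> : f y = phi 0 by rewrite /phi scale0r addr0.
have [t_ge0|t_lt0] := leP 0 t.
  have [c _ ->] := MVT_segment t_ge0 (fun s _ => phi' s) (phi_cont 0 t).
  by rewrite subr0 normrM ler_wpM2r.
have [c _ phi_t] := MVT_segment (ltW t_lt0) (fun s _ => phi' s) (phi_cont t 0).
by rewrite -opprB normrN phi_t sub0r normrM normrN ler_wpM2r.
Qed.

Lemma dirV_entry_le1 (R : realType) d (u : 'I_d * bool) l : `|dirV R u 0 l| <= 1.
Proof.
rewrite /dirV !mxE normrM.
by case: u.2; case: (_ && _); rewrite ?normrN ?normr1 ?normr0 ?mulr1 ?mulr0.
Qed.

Lemma dirV_inj (R : realType) d : injective (@dirV R d).
Proof.
move=> [l b] [l' b'] /(congr1 (fun M : 'rV[R]_d => M 0 l)).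
rewrite /dirV !mxE /= eqxx /=; have [<-|_] := eqVneq l l'.
  by rewrite !mulr1; case: b; case: b' => //= h; exfalso; lra.
by rewrite mulr0 mulr1 => h; exfalso; move: h; case: b => /=; lra.
Qed.

Lemma sum_dir (V : nmodType) d (F : 'I_d * bool -> V) :
  \sum_u F u = \sum_l (F (l, true) + F (l, false)).
Proof.
transitivity (\sum_(u : 'I_d * bool) F (u.1, u.2)); first by apply: eq_bigr => -[].
rewrite -(pair_big predT predT (fun l b => F (l, b))) /=.
by apply: eq_bigr => l _; rewrite big_bool.
Qed.

Section Kernels.
Variables (R : realType) (d : nat) (E : finType).
Variable p : E -> 'rV[R]_d -> 'I_d * bool -> R.
Hypothesis p_ge0 : forall k y u, 0 <= p k y u.
Hypothesis p_sum1 : forall k y, \sum_u p k y u = 1.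

Lemma q_ge0 k y u : 0 <= q p k y u.
Proof.
by rewrite /q; do ![case: ifP => _]; case: u.2; rewrite ?addr_ge0.
Qed.

Lemma q_sum1 k y : \sum_u q p k y u = 1.
Proof.
rewrite -(p_sum1 k y) !sum_dir; apply: eq_bigr => l _; rewrite /q /=.
by do ![case: ifP => _]; rewrite ?add0r ?addr0.
Qed.

Lemma g_norm_le1 k y : `|g p k y| <= 1.
Proof.
apply: rV_norm_le => // l; rewrite /g summxE -(p_sum1 k y).
apply: le_trans (ler_norm_sum _ _ _) _; apply: ler_sum => u _.
by rewrite mxE normrM ger0_norm // ler_piMr ?dirV_entry_le1.
Qed.

Lemma g_lipschitz : (forall k u, C2_bounded_derivs (fun y => p k y u)) ->
  exists2 L, 0 <= L & forall k y t u',
    `|g p k (y + t *: dirV R u') - g p k y| <= L * `|t|.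
Proof.
move=> p_C2.
have Dp_bounded (ku : E * ('I_d * bool)) : exists M : R, forall x l,
    `|'D_(delta_mx 0 l) (fun y => p ku.1 y ku.2) x| <= M.
  by case: ku => k u; have [_ [_ [_ []]]] := p_C2 k u.
have [M M_le] := fin_all_exists Dp_bounded.
pose L := \sum_ku `|M ku|.
have L_ge0 : 0 <= L by apply: sumr_ge0.
have M_le_L ku : M ku <= L.
  by apply: le_trans (ler_norm _) _; rewrite /L (bigD1 ku) //= lerDl sumr_ge0.
have p_lip k u y t l b : `|p k (y + t *: dirV R (l, b)) u - p k y u| <= L * `|t|.
  rewrite /dirV scalerA.
  have [p_der _] := p_C2 k u.
  apply: le_trans (lipschitz_along (p_der ^~ l) _ y _) _.
    by move=> x; apply: le_trans (M_le (k, u) x l) (M_le_L _).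
  by apply: ler_wpM2l => //; case: b; rewrite ?mulrN1 ?mulr1 ?normrN.
exists (#|{: 'I_d * bool}|%:R * L) => [|k y t [l b]]; first by rewrite mulr_ge0.
apply: rV_norm_le; first by rewrite !mulr_ge0.
move=> l'; rewrite /g -sumrB summxE.
apply: le_trans (ler_norm_sum _ _ _) _.
rewrite -mulrA mulr_natl -sumr_const; apply: ler_sum => u _.
rewrite -scalerBl [(_ *: dirV R u) _ _]mxE normrM -[leRHS]mulr1.
by apply: ler_pM => //; apply: dirV_entry_le1.
Qed.

End Kernels.

Section CorrectorBound.
Variables (R : realType) (d : nat) (E : finType).
Variables (P : E -> E -> R) (mu : E -> R) (p : E -> 'rV[R]_d -> 'I_d * bool -> R).
Hypothesis P_ge0 : forall i j, 0 <= P i j.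
Hypothesis P_sum1 : forall i, \sum_j P i j = 1.
Hypothesis P_irr : irreducible P.
Hypothesis P_aper : aperiodic P.
Hypothesis mu_inv : invariant_probability P mu.
Hypothesis p_ge0 : forall k y u, 0 <= p k y u.
Hypothesis p_sum1 : forall k y, \sum_u p k y u = 1.
Hypothesis p_C2 : forall k u, C2_bounded_derivs (fun y => p k y u).
Hypothesis g_mean0 : forall y, \sum_k mu k *: g p k y = 0.

Lemma v_potential i y : v P p i y = potential P (g p ^~ y) i.
Proof. by []. Qed.

Lemma Pseries_g_cvg i y : cvgn (Pseries P (g p ^~ y) i).
Proof.
have [K _ hK] := potential_bound P_ge0 P_sum1 P_irr P_aper mu_inv.
by have [] := hK _ (g p ^~ y) 1 (g_norm_le1 p_ge0 p_sum1 ^~ y) (g_mean0 y) i.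
Qed.

Lemma v_Poisson i y : \sum_k P i k *: v P p k y = v P p i y - g p i y.
Proof. by apply: potential_Poisson => k; apply: Pseries_g_cvg. Qed.

Lemma cm_bound : exists C : R, forall m i y, `|cm P p m i y| <= C / m%:R.
Proof.
have [K K_ge0 hK] := potential_bound P_ge0 P_sum1 P_irr P_aper mu_inv.
have [L L_ge0 g_lip] := g_lipschitz p_C2.
exists ((K + 1) * L) => m i y.
have m_inv : `|m%:R^-1| = m%:R^-1 :> R by rewrite ger0_norm // invr_ge0.
have v_lip u : `|v P p i (y + m%:R^-1 *: dirV R u) - v P p i y| <= K * (L / m%:R).
  rewrite !v_potential -potentialB; [|exact: Pseries_g_cvg..].
  apply: (proj2 (hK _ _ _ _ _ i)) => [j|].
    by apply: le_trans (g_lip _ _ _ _) _; rewrite m_inv.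
  by under eq_bigr do rewrite scalerBr; rewrite sumrB !g_mean0 subrr.
rewrite /cm; apply: le_trans (ler_norm_sum _ _ _) _.
apply: (@le_trans _ _ (\sum_u q p i y u * ((K + 1) * (L / m%:R)))); last first.
  by rewrite -mulr_suml q_sum1 // mul1r mulrA.
apply: ler_sum => u _; rewrite normrZ ger0_norm ?q_ge0 //.
apply: ler_wpM2l; first exact: q_ge0.
have regroup (a b c e : 'rV[R]_d) : a - b - (c - e) = (a - c) - (b - e).
  by rewrite !opprB addrACA [RHS]addrACA; congr (_ + _); apply: addrC.
rewrite regroup mulrDl mul1r; apply: le_trans (ler_normB _ _) (lerD (v_lip u) _).
by apply: le_trans (g_lip _ _ _ _) _; rewrite m_inv.
Qed.

End CorrectorBound.

Lemma sum_disjoint_cover (V : nmodType) (S K : finType) (A : K -> pred S) (F : S -> V) :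
  (forall s k k', A k s -> A k' s -> k = k') ->
  \sum_k \sum_(s | A k s) F s = \sum_(s | [exists k, A k s]) F s.
Proof.
move=> A_disj; rewrite (exchange_big_dep [pred s | [exists k, A k s]]) /=; last first.
  by move=> k s _ Aks; apply/existsP; exists k.
apply: eq_bigr => s /existsP[k Aks]; rewrite (big_pred1 k) // => k'.
by apply/idP/eqP => [Ak's|->]; [apply: A_disj Ak's Aks | apply: Aks].
Qed.

(* A finite mass [a] whose restriction to each block [A k] is the fraction [w k] of
   the total, with [w] summing to one, is carried by the blocks. *)
Lemma sum_mass_partition (R : numDomainType) (S K : finType) (a : S -> R)
    (A : K -> pred S) (w : K -> R) (phi : S -> R) (c : K -> R) :
  (forall s, 0 <= a s) -> (forall s k k', A k s -> A k' s -> k = k') ->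
  (forall k, \sum_(s | A k s) a s = w k * \sum_s a s) -> \sum_k w k = 1 ->
  (forall k s, A k s -> phi s = c k) ->
  \sum_s phi s * a s = (\sum_k w k * c k) * \sum_s a s.
Proof.
move=> a_ge0 A_disj a_A w_sum1 phi_A.
set cov := fun s => [exists k, A k s].
have a_cov : \sum_(s | cov s) a s = \sum_s a s.
  rewrite -sum_disjoint_cover //; under eq_bigr do rewrite a_A.
  by rewrite -mulr_suml w_sum1 mul1r.
have a_off s : ~~ cov s -> a s = 0.
  have : \sum_(s | ~~ cov s) a s = 0.
    apply: (@addrI _ (\sum_(s | cov s) a s)).
    by rewrite addr0 [RHS]a_cov [RHS](bigID cov).
  by move/psumr_eq0P; apply=> // t _; apply: a_ge0.
rewrite (bigID cov) /= [X in _ + X]big1 ?addr0 => [|s /a_off ->]; last by rewrite mulr0.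
rewrite -(sum_disjoint_cover (fun s => phi s * a s)) // mulr_suml; apply: eq_bigr => k _.
rewrite (eq_bigr (fun s => c k * a s)) => [|s /phi_A ->] //.
by rewrite -mulr_sumr a_A mulrCA mulrA.
Qed.

Section FiniteValued.
Context (dT : measure_display) (T : measurableType dT) (R : realType).
Variable Pr : probability T R.

Definition pr (A : set T) : R := fine (Pr A).

Lemma pr_ge0 A : 0 <= pr A.
Proof. by rewrite /pr fine_ge0 // measure_ge0. Qed.

Variables (S : finType) (Y : T -> S).
Hypothesis Y_meas : forall s, measurable (Y @^-1` [set s]).

Lemma preimage_measurable Q : measurable (Y @^-1` Q).
Proof.
have -> : Y @^-1` Q = \bigcup_(s in Q) Y @^-1` [set s].
  by apply/seteqP; split => [w Qw|w [s Qs /= ->]] //; exists (Y w).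
by apply: fin_bigcup_measurable => // s _; apply: Y_meas.
Qed.

Lemma integral_finite_valued A (phi : S -> R) : measurable A ->
  (\int[Pr]_(w in A) (phi (Y w))%:E = (\sum_s phi s * pr (A `&` Y @^-1` [set s]))%:E)%E.
Proof.
move=> mA.
transitivity (\int[Pr]_(w in A) (\sum_s (phi s)%:E * (\1_(Y @^-1` [set s]) w)%:E))%E.
  apply: eq_integral => w _; rewrite (bigD1 (Y w)) //= indicE mem_set // mule1.
  rewrite big1 ?adde0 // => s Yw_neq; rewrite indicE memNset ?mule0 //= => Yw_eq.
  by move: Yw_neq; rewrite Yw_eq eqxx.
have indic_int s : Pr.-integrable A (fun w => (\1_(Y @^-1` [set s]) w)%:E).
  by apply: (integrableS (E := setT)) => //; apply: integrable_indic.
rewrite integral_sum //; last by move=> s; apply: integrableZl.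
rewrite -sumEFin; apply: eq_bigr => s _; rewrite integralZl // integral_indic //.
by rewrite setIC EFinM /pr fineK //; apply/fin_num_measure/measurableI.
Qed.

Lemma pr_preimage A Q : measurable A ->
  pr (A `&` Y @^-1` Q) = \sum_(s | s \in Q) pr (A `&` Y @^-1` [set s]).
Proof.
move=> mA; have := integral_finite_valued (fun s => (s \in Q)%:R) mA.
have -> : (\int[Pr]_(w in A) ((Y w \in Q)%:R)%:E =
    \int[Pr]_(w in A) (\1_(Y @^-1` Q) w)%:E)%E.
  by apply: eq_integral => w _; rewrite indicE.
rewrite integral_indic //; last exact: preimage_measurable.
rewrite setIC => /(congr1 fine); rewrite -/(pr _) => ->.
rewrite [RHS]big_mkcond /=; apply: eq_bigr => s _.
by case: (s \in Q); rewrite ?mul1r ?mul0r.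
Qed.

Lemma pr_partition A : measurable A -> pr A = \sum_s pr (A `&` Y @^-1` [set s]).
Proof.
move=> mA; rewrite -[A in LHS]setIT -(preimage_setT Y) pr_preimage //.
by apply: eq_bigl => s; rewrite in_setT.
Qed.

End FiniteValued.

Section History.
Variables (d : nat) (E : finType) (m : nat) (dT : measure_display) (T : measurableType dT).
Variable X : nat -> T -> state d E m.
Hypothesis X_meas : forall n s, measurable [set w | X n w = s].

Lemma nth_history n w s : nth s (history X n w) n = X n w.
Proof. by rewrite /history (nth_map 0%N) ?size_iota // nth_iota // add0n. Qed.

Lemma Fn_restrict n A s : Fn X n A -> Fn X n (A `&` [set w | X n w = s]).
Proof.
case=> S0 ->; exists [set hh | S0 hh /\ nth s hh n = s].
apply/seteqP; split => w /= [h1 h2]; split => //; first by rewrite nth_history.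
by rewrite -(nth_history n w s).
Qed.

Lemma Fn_measurable n A : Fn X n A -> measurable A.
Proof.
case=> S0 ->; pose H w := [ffun k : 'I_n.+1 => X k w].
have history_H w : history X n w = [seq H w (inord k) | k <- iota 0 n.+1].
  apply/eq_in_map => k; rewrite mem_iota add0n => /andP[_ k_lt].
  by rewrite ffunE inordK.
have -> : history X n @^-1` S0 = H @^-1` [set f | S0 [seq f (inord k) | k <- iota 0 n.+1]].
  by apply/seteqP; split => w /=; rewrite history_H.
apply: preimage_measurable => f.
have -> : H @^-1` [set f] = \bigcap_(k in [set: 'I_n.+1]) [set w | X k w = f k].
  apply/seteqP; split => w /=; first by move=> <- k _; rewrite ffunE.
  by move=> Hw; apply/ffunP => k; rewrite ffunE; apply: Hw.
by apply: fin_bigcap_measurable => // k _; apply: X_meas.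
Qed.

End History.

Section Drift.
Variables (R : realType) (d : nat) (E : finType) (P : E -> E -> R).
Variables (p : E -> 'rV[R]_d -> 'I_d * bool -> R) (m : nat).

Definition Z_step (i : E) (r : 'rV[R]_d) (k : E) (r' : 'rV[R]_d) : 'rV[R]_d :=
  let y := m%:R^-1 *: r in
  r' + v P p k (m%:R^-1 *: r') - (r + v P p i y + (h p i y - g p i y) + cm P p m i y).

(* Summing over the next environment state first turns [v] into [v - g] by the
   Poisson equation; the remaining average of [v - g] over the jumps is [cm]. *)
Lemma Z_step_drift i r : \sum_k P i k = 1 -> \sum_u q p i (m%:R^-1 *: r) u = 1 ->
  (forall z, \sum_k P i k *: v P p k z = v P p i z - g p i z) ->
  \sum_(ku : E * ('I_d * bool)) (P i ku.1 * q p i (m%:R^-1 *: r) ku.2) *: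
    Z_step i r ku.1 (r + dirV R ku.2) = 0.
Proof.
move=> P_sum1 q_sum1 Poisson; set y := m%:R^-1 *: r.
pose W := r + v P p i y + (h p i y - g p i y) + cm P p m i y.
rewrite -(pair_big predT predT
  (fun k u => (P i k * q p i y u) *: Z_step i r k (r + dirV R u))) /=.
transitivity (\sum_u q p i y u *: (dirV R u + (v P p i (y + m%:R^-1 *: dirV R u)
    - g p i (y + m%:R^-1 *: dirV R u)) + (r - W))).
  rewrite exchange_big /=; apply: eq_bigr => u _.
  transitivity (q p i y u *: \sum_k P i k *: Z_step i r k (r + dirV R u)).
    by rewrite scaler_sumr; apply: eq_bigr => k _; rewrite scalerA mulrC.
  have -> : \sum_k P i k *: Z_step i r k (r + dirV R u) =
      (r + dirV R u - W) + \sum_k P i k *: v P p k (y + m%:R^-1 *: dirV R u).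
    have -> : r + dirV R u - W = \sum_k P i k *: (r + dirV R u - W).
      by rewrite -scaler_suml P_sum1 scale1r.
    rewrite -big_split /=; apply: eq_bigr => k _.
    rewrite /Z_step -/W -scalerDr addrAC; congr (_ *: (_ + v P p k _)).
    by rewrite scalerDr.
  by rewrite Poisson; congr (_ *: _); apply/rowP => l; rewrite !mxE; ring.
have avg_vg : \sum_u q p i y u *: (v P p i (y + m%:R^-1 *: dirV R u)
    - g p i (y + m%:R^-1 *: dirV R u)) = cm P p m i y + (v P p i y - g p i y).
  have -> : v P p i y - g p i y = \sum_u q p i y u *: (v P p i y - g p i y).
    by rewrite -scaler_suml q_sum1 scale1r.
  rewrite /cm -big_split /=; apply: eq_bigr => u _.
  by rewrite -(scalerDr (q p i y u)) subrK.
under eq_bigr do rewrite 2!scalerDr.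
rewrite !big_split /= -scaler_suml q_sum1 scale1r avg_vg -/(h p i y) /W.
by apply/rowP => l; rewrite !mxE; ring.
Qed.

End Drift.

Section Martingale.
Variables (R : realType) (d : nat) (E : finType) (P : E -> E -> R).
Variables (p : E -> 'rV[R]_d -> 'I_d * bool -> R) (m : nat).
Variables (dT : measure_display) (T : measurableType dT) (Pr : probability T R).
Variable X : nat -> T -> state d E m.
Hypothesis P_sum1 : forall i, \sum_j P i j = 1.
Hypothesis p_sum1 : forall k y, \sum_u p k y u = 1.
Hypothesis v_Poisson : forall i z, \sum_k P i k *: v P p k z = v P p i z - g p i z.
Hypothesis X_meas : forall n s, measurable [set w | X n w = s].
Hypothesis X_step : forall n A, Fn X n A -> forall k u,
  Pr (A `&` [set w | (X n.+1 w).1 = k /\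
                     rvec R (X n.+1 w).2 = rvec R (X n w).2 + dirV R u]) =
  (\int[Pr]_(w in A)
     (P (X n w).1 k * q p (X n w).1 (m%:R^-1 *: rvec R (X n w).2) u)%:E)%E.

Definition jumps_to (s0 : state d E m) (ku : E * ('I_d * bool)) (s1 : state d E m) :=
  (s1.1 == ku.1) && (rvec R s1.2 == rvec R s0.2 + dirV R ku.2).

Lemma pr_jump n B s0 ku : Fn X n B -> B `<=` [set w | X n w = s0] ->
  pr Pr (B `&` X n.+1 @^-1` [set s1 | jumps_to s0 ku s1]) =
  P s0.1 ku.1 * q p s0.1 (m%:R^-1 *: rvec R s0.2) ku.2 * pr Pr B.
Proof.
move=> FnB B_s0; have mB := Fn_measurable X_meas FnB.
have -> : B `&` X n.+1 @^-1` [set s1 | jumps_to s0 ku s1] = B `&` [set w |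
    (X n.+1 w).1 = ku.1 /\ rvec R (X n.+1 w).2 = rvec R (X n w).2 + dirV R ku.2].
  apply/seteqP; split => w [Bw]; rewrite /= (B_s0 w Bw).
    by case/andP=> /eqP ? /eqP ?.
  by case=> ? ?; split=> //; apply/andP; split; apply/eqP.
rewrite /pr (X_step FnB).
under eq_integral => w /set_mem Bw do rewrite (B_s0 w Bw).
by rewrite integral_cst // fineM // fin_num_measure.
Qed.

Lemma Z_step_mean0 n A s0 l : Fn X n A ->
  \sum_s1 Z_step P p m s0.1 (rvec R s0.2) s1.1 (rvec R s1.2) 0 l *
    pr Pr (A `&` [set w | X n w = s0] `&` X n.+1 @^-1` [set s1]) = 0.
Proof.
move=> FnA; set B := A `&` _; have FnB : Fn X n B := Fn_restrict s0 FnA.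
have mB := Fn_measurable X_meas FnB.
rewrite (@sum_mass_partition _ _ _ _ (jumps_to s0) (fun ku =>
    P s0.1 ku.1 * q p s0.1 (m%:R^-1 *: rvec R s0.2) ku.2) _ (fun ku =>
    Z_step P p m s0.1 (rvec R s0.2) ku.1 (rvec R s0.2 + dirV R ku.2) 0 l)).
- have := @Z_step_drift R d E P p m s0.1 (rvec R s0.2)
    (P_sum1 _) (q_sum1 p_sum1 _ _) (v_Poisson _).
  move/(congr1 (fun M : 'rV[R]_d => M 0 l)); rewrite /= summxE mxE => drift.
  apply/eqP; rewrite mulf_eq0; apply/orP; left; apply/eqP.
  by rewrite -[RHS]drift; apply: eq_bigr => ku _; rewrite [RHS]mxE.
- by move=> s1; apply: pr_ge0.
- move=> s1 [k u] [k' u'] /andP[/eqP/= <- /eqP/= jump] /andP[/eqP/= <- /eqP/=].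
  by rewrite jump => /addrI/dirV_inj ->.
- move=> ku; rewrite -(pr_partition Pr (X_meas n.+1) mB).
  rewrite -(pr_jump ku FnB) => [|w []//]; rewrite (pr_preimage Pr (X_meas n.+1) _ mB).
  by apply: eq_bigl => s; apply/idP/idP => [/mem_set|/set_mem].
- rewrite -(pair_big predT predT (fun k u => P s0.1 k * q p s0.1 _ u)) /=.
  by under eq_bigr do rewrite -mulr_sumr q_sum1 // mulr1.
- by move=> [k u] s1 /andP[/eqP/= <- /eqP/= ->].
Qed.

Lemma Z_martingale n A l : Fn X n A -> (\int[Pr]_(w in A) ((Z P p X n w) 0 l)%:E = 0)%E.
Proof.
move=> FnA; have mA := Fn_measurable X_meas FnA; pose key w := (X n w, X n.+1 w).
have key_meas t : measurable (key @^-1` [set t]).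
  case: t => s0 s1.
  have -> : key @^-1` [set (s0, s1)] = [set w | X n w = s0] `&` [set w | X n.+1 w = s1].
    by apply/seteqP; split => w /=; [case=> -> -> | case=> <- <-].
  exact: measurableI.
pose phi (t : state d E m * state d E m) :=
  Z_step P p m t.1.1 (rvec R t.1.2) t.2.1 (rvec R t.2.2) 0 l.
rewrite (_ : (\int[Pr]_(w in A) _ = \int[Pr]_(w in A) (phi (key w))%:E)%E) //.
rewrite integral_finite_valued //.
have -> : \sum_t phi t * pr Pr (A `&` key @^-1` [set t]) = \sum_s0 \sum_s1
    phi (s0, s1) * pr Pr (A `&` [set w | X n w = s0] `&` X n.+1 @^-1` [set s1]).
  rewrite pair_big; apply: eq_bigr => -[s0 s1] _; congr (_ * pr Pr _).
  by apply/seteqP; split => w /=; [case=> Aw [<- <-] | case=> [[Aw <-] <-]].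
by rewrite big1 // => s0 _; apply: Z_step_mean0 FnA.
Qed.

End Martingale.

Theorem proposition5p1 (R : realType) (d : nat) (E : finType)
  (P : E -> E -> R) (mu : E -> R) (p : E -> 'rV[R]_d -> 'I_d * bool -> R) :
  (0 < d)%N ->
  stochastic P -> irreducible P -> aperiodic P ->
  invariant_probability P mu ->
  (forall k y u, 0 <= p k y u) ->
  (forall k y, \sum_(u : 'I_d * bool) p k y u = 1) ->
  (forall k u, C2_bounded_derivs (fun y => p k y u)) ->
  (forall y, \sum_(k : E) mu k *: g p k y = 0) ->
  (* the bound on c^(m), with C depending only on E, P and p *)
  (exists C : R, forall m : nat, (0 < m)%N ->
     forall (i : E) (y : 'rV[R]_d), unit_cube y ->
       `|cm P p m i y| <= C / m%:R) /\
  (* the martingale-increment property of Z_{n+1} *)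
  (forall m : nat, (0 < m)%N ->
   forall (dT : measure_display) (T : measurableType dT)
          (Pr : probability T R) (X : nat -> T -> state d E m),
     (forall n (s : state d E m), measurable [set w | X n w = s]) ->
     (forall w, (X 0%N w).2 = [ffun => ord0]) ->
     (forall n A, Fn X n A -> forall (k : E) (u : 'I_d * bool),
        Pr (A `&` [set w | (X n.+1 w).1 = k /\
                           rvec R (X n.+1 w).2 = rvec R (X n w).2 + dirV R u]) =
        (\int[Pr]_(w in A)
           (P (X n w).1 k * q p (X n w).1 (m%:R^-1 *: rvec R (X n w).2) u)%:E)%E) ->
     forall n A, Fn X n A -> forall l : 'I_d,
       (\int[Pr]_(w in A) ((Z P p X n w) 0 l)%:E = 0)%E).
Proof.
move=> _ [P_ge0 P_sum1] P_irr P_aper mu_inv p_ge0 p_sum1 p_C2 g_mean0; split.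
  have [C C_bound] := cm_bound P_ge0 P_sum1 P_irr P_aper mu_inv p_ge0 p_sum1 p_C2 g_mean0.
  by exists C => m _ i y _; apply: C_bound.
move=> m _ dT T Pr X X_meas _ X_step n A FnA l.
have v_P := v_Poisson P_ge0 P_sum1 P_irr P_aper mu_inv p_ge0 p_sum1 g_mean0.
exact: (Z_martingale P_sum1 p_sum1 v_P X_meas X_step l FnA).
Qed.
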